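(* In a semi-abelian category whose only abelian object is the zero object, let $K,L$ be normal subobjects of an object $A$ and $f\colon A\to B$ a morphism. Then $f(K)\wedge f(L)=f(K\wedge L)$, where $f(-)$ denotes the regular image (epi-mono image) of a subobject along $f$.
   Context: Semi-abelian category: pointed, Barr-exact, protomodular, with binary coproducts; a normal subobject is a kernel; $\wedge$ is intersection of subobjects. An object $A$ is abelian if there is $\varphi\colon A\times A\to A$ with $\varphi\circ(1_A,0)=1_A=\varphi\circ(0,1_A)$. *)

Set Implicit Arguments.
Set Universe Polymorphism.

Record Cat := {
  Ob :> Type;
  Hom : Ob -> Ob -> Type;
  idm : forall A, Hom A A;
  comp : forall A B D, Hom B D -> Hom A B -> Hom A D;
  comp_id_l : forall A B (f : Hom A B), comp (idm B) f = f;
  comp_id_r : forall A B (f : Hom A B), comp f (idm A) = f;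
  comp_assoc : forall A B D E (h : Hom D E) (g : Hom B D) (f : Hom A B),
      comp h (comp g f) = comp (comp h g) f
}.

Arguments Hom {c} _ _.
Arguments idm {c} _.
Arguments comp {c A B D} _ _.

Notation "g ∘ f" := (comp g f) (at level 40, left associativity).

Section Notions.
Variable C : Cat.

Definition mono {A B : C} (f : Hom A B) : Prop :=
  forall X (g h : Hom X A), f ∘ g = f ∘ h -> g = h.

Definition is_iso {A B : C} (f : Hom A B) : Prop :=
  exists g : Hom B A, g ∘ f = idm A /\ f ∘ g = idm B.

Definition is_zero (Z : C) : Prop :=
  (forall X : C, exists f : Hom Z X, forall g : Hom Z X, g = f) /\
  (forall X : C, exists f : Hom X Z, forall g : Hom X Z, g = f).

Definition pointed : Prop := exists Z : C, is_zero Z.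

Definition is_zero_mor {A B : C} (f : Hom A B) : Prop :=
  exists (Z : C) (g : Hom A Z) (h : Hom Z B), is_zero Z /\ f = h ∘ g.

Definition is_pullback {A B D P : C} (f : Hom A D) (g : Hom B D)
    (p1 : Hom P A) (p2 : Hom P B) : Prop :=
  f ∘ p1 = g ∘ p2 /\
  forall (X : C) (x1 : Hom X A) (x2 : Hom X B), f ∘ x1 = g ∘ x2 ->
    exists u : Hom X P, (p1 ∘ u = x1 /\ p2 ∘ u = x2) /\
      forall v : Hom X P, p1 ∘ v = x1 -> p2 ∘ v = x2 -> v = u.

Definition has_pullbacks : Prop :=
  forall (A B D : C) (f : Hom A D) (g : Hom B D),
    exists (P : C) (p1 : Hom P A) (p2 : Hom P B), is_pullback f g p1 p2.

Definition is_product {A B P : C} (p1 : Hom P A) (p2 : Hom P B) : Prop :=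
  forall (X : C) (x1 : Hom X A) (x2 : Hom X B),
    exists u : Hom X P, (p1 ∘ u = x1 /\ p2 ∘ u = x2) /\
      forall v : Hom X P, p1 ∘ v = x1 -> p2 ∘ v = x2 -> v = u.

Definition is_coproduct {A B S : C} (i1 : Hom A S) (i2 : Hom B S) : Prop :=
  forall (X : C) (x1 : Hom A X) (x2 : Hom B X),
    exists u : Hom S X, (u ∘ i1 = x1 /\ u ∘ i2 = x2) /\
      forall v : Hom S X, v ∘ i1 = x1 -> v ∘ i2 = x2 -> v = u.

Definition has_binary_coproducts : Prop :=
  forall A B : C, exists (S : C) (i1 : Hom A S) (i2 : Hom B S), is_coproduct i1 i2.

Definition is_kernel {K A B : C} (k : Hom K A) (f : Hom A B) : Prop :=
  is_zero_mor (f ∘ k) /\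
  forall (X : C) (x : Hom X A), is_zero_mor (f ∘ x) ->
    exists u : Hom X K, k ∘ u = x /\ forall v : Hom X K, k ∘ v = x -> v = u.

Definition normal_sub {K A : C} (k : Hom K A) : Prop :=
  exists (Q : C) (g : Hom A Q), is_kernel k g.

Definition is_coequalizer {R A Q : C} (a b : Hom R A) (q : Hom A Q) : Prop :=
  q ∘ a = q ∘ b /\
  forall (X : C) (x : Hom A X), x ∘ a = x ∘ b ->
    exists u : Hom Q X, u ∘ q = x /\ forall v : Hom Q X, v ∘ q = x -> v = u.

Definition regular_epi {A Q : C} (q : Hom A Q) : Prop :=
  exists (R : C) (a b : Hom R A), is_coequalizer a b q.

(* regular category (finite limits are provided by pullbacks + the zero
   object, which is terminal, in the pointed case) *)
Definition regular : Prop :=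
  has_pullbacks /\
  (exists T : C, forall X : C, exists f : Hom X T, forall g : Hom X T, g = f) /\
  (forall (A B : C) (f : Hom A B),
     exists (I : C) (e : Hom A I) (m : Hom I B), regular_epi e /\ mono m /\ f = m ∘ e) /\
  (forall (A B D P : C) (q : Hom A B) (g : Hom D B) (p1 : Hom P A) (p2 : Hom P D),
     regular_epi q -> is_pullback q g p1 p2 -> regular_epi p2).

Definition jointly_mono {R A : C} (r1 r2 : Hom R A) : Prop :=
  forall (X : C) (g h : Hom X R), r1 ∘ g = r1 ∘ h -> r2 ∘ g = r2 ∘ h -> g = h.

Definition relates {R A : C} (r1 r2 : Hom R A) {X : C} (x y : Hom X A) : Prop :=
  exists h : Hom X R, r1 ∘ h = x /\ r2 ∘ h = y.

Definition is_equiv_rel {R A : C} (r1 r2 : Hom R A) : Prop :=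
  jointly_mono r1 r2 /\
  (forall (X : C) (x : Hom X A), relates r1 r2 x x) /\
  (forall (X : C) (x y : Hom X A), relates r1 r2 x y -> relates r1 r2 y x) /\
  (forall (X : C) (x y z : Hom X A),
      relates r1 r2 x y -> relates r1 r2 y z -> relates r1 r2 x z).

Definition barr_exact : Prop :=
  regular /\
  forall (R A : C) (r1 r2 : Hom R A), is_equiv_rel r1 r2 ->
    exists (B : C) (f : Hom A B), is_pullback f f r1 r2.

(* protomodularity, in its pointed form: the split short five lemma *)
Definition protomodular : Prop :=
  forall (K A B K' A' B' : C)
         (k : Hom K A) (p : Hom A B) (s : Hom B A)
         (k' : Hom K' A') (p' : Hom A' B') (s' : Hom B' A')
         (u : Hom K K') (w : Hom A A') (v : Hom B B'),
    p ∘ s = idm B -> is_kernel k p ->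
    p' ∘ s' = idm B' -> is_kernel k' p' ->
    w ∘ k = k' ∘ u -> p' ∘ w = v ∘ p -> w ∘ s = s' ∘ v ->
    is_iso u -> is_iso v -> is_iso w.

Definition semi_abelian : Prop :=
  pointed /\ barr_exact /\ protomodular /\ has_binary_coproducts.

Definition abelian_object (A : C) : Prop :=
  exists (P : C) (p1 p2 : Hom P A), is_product p1 p2 /\
  exists phi : Hom P A,
    forall d1 d2 : Hom A P,
      p1 ∘ d1 = idm A -> is_zero_mor (p2 ∘ d1) ->
      is_zero_mor (p1 ∘ d2) -> p2 ∘ d2 = idm A ->
      phi ∘ d1 = idm A /\ phi ∘ d2 = idm A.

Definition is_regular_image {X I B : C} (g : Hom X B) (m : Hom I B) : Prop :=
  mono m /\ exists e : Hom X I, regular_epi e /\ g = m ∘ e.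

Definition same_subobject {S T B : C} (m : Hom S B) (n : Hom T B) : Prop :=
  exists (a : Hom S T) (b : Hom T S), n ∘ a = m /\ m ∘ b = n.

End Notions.

Arguments pointed : clear implicits.
Arguments regular : clear implicits.
Arguments barr_exact : clear implicits.
Arguments protomodular : clear implicits.
Arguments has_binary_coproducts : clear implicits.
Arguments has_pullbacks : clear implicits.
Arguments semi_abelian : clear implicits.
Arguments is_zero {C} Z.
Arguments abelian_object {C} A.
Arguments mono {C A B} f.
Arguments is_iso {C A B} f.
Arguments is_zero_mor {C A B} f.
Arguments is_pullback {C A B D P} f g p1 p2.
Arguments is_product {C A B P} p1 p2.
Arguments is_coproduct {C A B S} i1 i2.
Arguments is_kernel {C K A B} k f.
Arguments normal_sub {C K A} k.
Arguments is_coequalizer {C R A Q} a b q.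
Arguments regular_epi {C A Q} q.
Arguments jointly_mono {C R A} r1 r2.
Arguments relates {C R A} r1 r2 {X} x y.
Arguments is_equiv_rel {C R A} r1 r2.
Arguments is_regular_image {C X I B} g m.
Arguments same_subobject {C S T B} m n.

From Stdlib Require Import IndefiniteDescription.

(* Write K = ker p, L = ker q, and let g be the regular epi part of (p, q) : A → QK × QL,
   so that K ∧ L is the kernel of g.  A semi-abelian category is a Mal'tsev category, so
   Eq(f) ∘ Eq(g) is an equivalence relation and, by exactness, the kernel pair of some h.
   The images of K and L under g cooperate, the cooperator being induced by
   (x, y) ↦ (p y, q x) : K × L → QK × QL; hence so do h(K) and h(L), and the image of their
   meet is an abelian object, hence zero.  If x ∈ K and y ∈ L satisfy f x = f y, then
   h x = h y lies in that meet, so h x = h 0, i.e. f x = f z for some z with g z = 0, that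
   is z ∈ K ∧ L.  This gives f(K) ∧ f(L) ≤ f(K ∧ L) (up to covering generalized elements by
   regular epimorphisms); the converse inclusion holds in any regular category. *)

Section SemiAbelianCategory.

Variable C : Cat.

Lemma comp_idl {A B : C} (f : Hom A B) : idm B ∘ f = f.
Proof. apply comp_id_l. Qed.

Lemma comp_idr {A B : C} (f : Hom A B) : f ∘ idm A = f.
Proof. apply comp_id_r. Qed.

Lemma compA {A B D E : C} (h : Hom D E) (g : Hom B D) (f : Hom A B) :
  h ∘ (g ∘ f) = h ∘ g ∘ f.
Proof. apply comp_assoc. Qed.

Lemma mono_comp {A B D : C} {f : Hom A B} {g : Hom B D} :
  mono f -> mono g -> mono (g ∘ f).
Proof. intros Hf Hg X u v E. apply Hf, Hg. rewrite !compA; exact E. Qed.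

(** * Zero morphisms *)

Variable Z : C.
Hypothesis HZ : is_zero Z.

Lemma zero_mor_unique {X Y : C} (f g : Hom X Y) :
  is_zero_mor f -> is_zero_mor g -> f = g.
Proof.
  intros [Z1 [a [b [[I1 T1] ->]]]] [Z2 [c [d [[I2 T2] ->]]]].
  destruct (I1 Z2) as [i Hi], (I1 Y) as [u Hu], (T2 X) as [t Ht].
  rewrite (Hu b), <- (Hu (d ∘ i)), <- compA, (Ht (i ∘ a)), (Ht c).
  reflexivity.
Qed.

Lemma zero_mor_comp_r {X Y W : C} (f : Hom X Y) (g : Hom W X) :
  is_zero_mor f -> is_zero_mor (f ∘ g).
Proof.
  intros [Z1 [a [b [HZ1 ->]]]]. exists Z1, (a ∘ g), b. split; auto.
  symmetry; apply compA.
Qed.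

Lemma zero_mor_comp_l {X Y W : C} (f : Hom X Y) (g : Hom Y W) :
  is_zero_mor f -> is_zero_mor (g ∘ f).
Proof.
  intros [Z1 [a [b [HZ1 ->]]]]. exists Z1, a, (g ∘ b). split; auto. apply compA.
Qed.

Lemma zero_mor_exists (X Y : C) : exists f : Hom X Y, is_zero_mor f.
Proof.
  destruct HZ as [HI HT]. destruct (HI Y) as [a _], (HT X) as [b _].
  exists (a ∘ b), Z, b, a. auto.
Qed.

Definition zero (X Y : C) : Hom X Y :=
  proj1_sig (constructive_indefinite_description _ (zero_mor_exists X Y)).

Lemma zero_is_zero_mor X Y : is_zero_mor (zero X Y).
Proof. unfold zero; destruct constructive_indefinite_description; auto. Qed.

Opaque zero.

Lemma zero_mor_zero {X Y : C} (f : Hom X Y) : is_zero_mor f -> f = zero X Y.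
Proof. intros; apply zero_mor_unique; auto using zero_is_zero_mor. Qed.

Lemma zero_comp_r {X Y W : C} (g : Hom W X) : zero X Y ∘ g = zero W Y.
Proof. apply zero_mor_zero, zero_mor_comp_r, zero_is_zero_mor. Qed.

Lemma zero_comp_l {X Y W : C} (g : Hom Y W) : g ∘ zero X Y = zero X W.
Proof. apply zero_mor_zero, zero_mor_comp_l, zero_is_zero_mor. Qed.

(** * Products and pullbacks *)

Hypothesis Hpb : has_pullbacks C.

Lemma product_exists (X Y : C) :
  exists (P : C) (p1 : Hom P X) (p2 : Hom P Y), is_product p1 p2.
Proof.
  destruct HZ as [_ T]. destruct (T X) as [tX HX], (T Y) as [tY HY].
  destruct (Hpb _ _ _ tX tY) as [P [p1 [p2 [Hc Hu]]]].
  exists P, p1, p2. intros W x1 x2. destruct (T W) as [tW HW].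
  apply Hu. rewrite (HW (tX ∘ x1)), (HW (tY ∘ x2)). reflexivity.
Qed.

Section Product.
Context {X Y P : C} {p1 : Hom P X} {p2 : Hom P Y} (H : is_product p1 p2).

Lemma pairing_exists {W : C} (x1 : Hom W X) (x2 : Hom W Y) :
  exists u : Hom W P, p1 ∘ u = x1 /\ p2 ∘ u = x2.
Proof. destruct (H W x1 x2) as [u [Hu _]]; eauto. Qed.

Definition pairing {W : C} (x1 : Hom W X) (x2 : Hom W Y) : Hom W P :=
  proj1_sig (constructive_indefinite_description _ (pairing_exists x1 x2)).

Lemma pairing_fst {W : C} (x1 : Hom W X) (x2 : Hom W Y) : p1 ∘ pairing x1 x2 = x1.
Proof. unfold pairing; destruct constructive_indefinite_description as [u [h1 h2]]; auto. Qed.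

Lemma pairing_snd {W : C} (x1 : Hom W X) (x2 : Hom W Y) : p2 ∘ pairing x1 x2 = x2.
Proof. unfold pairing; destruct constructive_indefinite_description as [u [h1 h2]]; auto. Qed.

Lemma product_ext {W : C} (u v : Hom W P) :
  p1 ∘ u = p1 ∘ v -> p2 ∘ u = p2 ∘ v -> u = v.
Proof.
  intros E1 E2. destruct (H W (p1 ∘ v) (p2 ∘ v)) as [w [_ Hw]].
  rewrite (Hw u E1 E2), (Hw v eq_refl eq_refl). reflexivity.
Qed.

Lemma pairing_comp {W V : C} (x1 : Hom W X) (x2 : Hom W Y) (g : Hom V W) :
  pairing x1 x2 ∘ g = pairing (x1 ∘ g) (x2 ∘ g).
Proof. apply product_ext; rewrite !compA, ?pairing_fst, ?pairing_snd; reflexivity. Qed.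

Definition inj1 : Hom X P := pairing (idm X) (zero X Y).
Definition inj2 : Hom Y P := pairing (zero Y X) (idm Y).

Lemma pairing_zero_r {W : C} (x : Hom W X) : pairing x (zero W Y) = inj1 ∘ x.
Proof. unfold inj1. rewrite pairing_comp, comp_idl, zero_comp_r. reflexivity. Qed.

Lemma pairing_zero_l {W : C} (y : Hom W Y) : pairing (zero W X) y = inj2 ∘ y.
Proof. unfold inj2. rewrite pairing_comp, comp_idl, zero_comp_r. reflexivity. Qed.

End Product.


Opaque pairing.

Lemma product_swap {X Y P : C} {p1 : Hom P X} {p2 : Hom P Y} :
  is_product p1 p2 -> is_product p2 p1.
Proof.
  intros H W x2 x1. destruct (H W x1 x2) as [u [[h1 h2] hu]].
  exists u. split; auto.
Qed.

Lemma pairing_swap {X Y P : C} {p1 : Hom P X} {p2 : Hom P Y} (H : is_product p1 p2)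
  {W : C} (x : Hom W X) (y : Hom W Y) :
  pairing (product_swap H) y x = pairing H x y.
Proof. apply (product_ext H); now rewrite ?pairing_fst, ?pairing_snd. Qed.

Section Pullback.
Context {A B D P : C} {f : Hom A D} {g : Hom B D} {p1 : Hom P A} {p2 : Hom P B}
  (H : is_pullback f g p1 p2).

Lemma pullback_lift {W : C} (x1 : Hom W A) (x2 : Hom W B) :
  f ∘ x1 = g ∘ x2 -> exists u : Hom W P, p1 ∘ u = x1 /\ p2 ∘ u = x2.
Proof. intros E. destruct (proj2 H W x1 x2 E) as [u [Hu _]]; eauto. Qed.

Lemma pullback_ext {W : C} (u v : Hom W P) :
  p1 ∘ u = p1 ∘ v -> p2 ∘ u = p2 ∘ v -> u = v.
Proof.
  intros E1 E2.
  assert (E : f ∘ (p1 ∘ v) = g ∘ (p2 ∘ v)) by (rewrite !compA, (proj1 H); reflexivity).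
  destruct (proj2 H W _ _ E) as [w [_ Hw]].
  rewrite (Hw u E1 E2), (Hw v eq_refl eq_refl). reflexivity.
Qed.

Lemma pullback_mono : mono g -> mono p1.
Proof.
  intros Hg W u v E. apply pullback_ext; auto. apply Hg.
  rewrite !compA, <- (proj1 H), <- !compA, E. reflexivity.
Qed.

End Pullback.

Lemma preimage_subobject {T W M : C} (m : Hom M W) (x : Hom T W) : mono m ->
  exists (S : C) (s : Hom S T), mono s /\
    forall (X : C) (y : Hom X T), (exists z, x ∘ y = m ∘ z) <-> (exists w, s ∘ w = y).
Proof.
  intros Hm. destruct (Hpb _ _ _ x m) as [S [s [t H]]].
  exists S, s. split; [eapply pullback_mono; eauto|].
  intros X y; split.
  - intros [z Hz]. destruct (pullback_lift H y z Hz) as [w [h1 h2]]. eauto.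
  - intros [w <-]. exists (t ∘ w). rewrite !compA, (proj1 H). reflexivity.
Qed.

Lemma equalizer_exists {T W : C} (a b : Hom T W) :
  exists (E : C) (e : Hom E T), mono e /\
    forall (X : C) (y : Hom X T), a ∘ y = b ∘ y <-> (exists w, e ∘ w = y).
Proof.
  destruct (product_exists W W) as [P [q1 [q2 HP]]].
  set (diag := pairing HP (idm W) (idm W)).
  assert (Hdiag : mono diag).
  { intros X u v E. rewrite <- (comp_idl u), <- (comp_idl v).
    rewrite <- (pairing_fst HP (idm W) (idm W)). fold diag.
    rewrite <- !compA, E. reflexivity. }
  destruct (preimage_subobject diag (pairing HP a b) Hdiag) as [E [e [He Hiff]]].
  exists E, e. split; auto. intros X y. rewrite <- Hiff. split.
  - intros Hy. exists (a ∘ y). unfold diag. rewrite !pairing_comp, !comp_idl, Hy. reflexivity.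
  - intros [z Hz]. unfold diag in Hz. rewrite !pairing_comp, !comp_idl in Hz.
    transitivity z.
    + rewrite <- (pairing_fst HP (a ∘ y) (b ∘ y)), Hz, pairing_fst. reflexivity.
    + rewrite <- (pairing_snd HP (a ∘ y) (b ∘ y)), Hz, pairing_snd. reflexivity.
Qed.

(** * Regular epimorphisms *)

Hypothesis Hfact : forall (A B : C) (f : Hom A B),
  exists (I : C) (e : Hom A I) (m : Hom I B), regular_epi e /\ mono m /\ f = m ∘ e.
Hypothesis Hstab : forall (A B D P : C) (q : Hom A B) (g : Hom D B)
  (p1 : Hom P A) (p2 : Hom P D), regular_epi q -> is_pullback q g p1 p2 -> regular_epi p2.

Lemma regular_epi_epi {A B : C} {e : Hom A B} : regular_epi e ->
  forall (W : C) (u v : Hom B W), u ∘ e = v ∘ e -> u = v.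
Proof.
  intros [R [a [b [Hc Hu]]]] W u v E.
  assert (Hx : v ∘ e ∘ a = v ∘ e ∘ b) by (rewrite <- !compA, Hc; reflexivity).
  destruct (Hu W (v ∘ e) Hx) as [w [_ Hw]].
  rewrite (Hw u E), (Hw v eq_refl). reflexivity.
Qed.

Lemma regular_epi_factor {A B W : C} {e : Hom A B} (x : Hom A W) : regular_epi e ->
  (forall (Y : C) (u v : Hom Y A), e ∘ u = e ∘ v -> x ∘ u = x ∘ v) ->
  exists y, y ∘ e = x.
Proof.
  intros [R [a [b [Hc Hu]]]] H. destruct (Hu W x (H _ _ _ Hc)) as [w [Hw _]]. eauto.
Qed.

Lemma regular_epi_mono_diagonal {A B I W : C} {e : Hom A B} {m : Hom I W}
  {u : Hom A I} {v : Hom B W} :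
  regular_epi e -> mono m -> m ∘ u = v ∘ e -> exists d, m ∘ d = v /\ d ∘ e = u.
Proof.
  intros He Hm E. destruct (regular_epi_factor u He) as [d Hd].
  { intros Y x y Exy. apply Hm. rewrite !compA, E, <- !compA, Exy. reflexivity. }
  exists d. split; auto. apply (regular_epi_epi He). rewrite <- compA, Hd. auto.
Qed.

Lemma factor_through_mono_of_cover {X X' M W : C} {c : Hom X' X} {m : Hom M W}
  {y : Hom X W} {z : Hom X' M} :
  regular_epi c -> mono m -> y ∘ c = m ∘ z -> exists w, m ∘ w = y.
Proof.
  intros Hc Hm E. destruct (regular_epi_mono_diagonal Hc Hm (eq_sym E)) as [d [Hd _]]. eauto.
Qed.

Lemma split_mono_iso {A B : C} {m : Hom A B} {s : Hom B A} :
  mono m -> m ∘ s = idm B -> is_iso m.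
Proof.
  intros Hm H. exists s. split; auto.
  apply Hm. rewrite compA, H, comp_idl, comp_idr. reflexivity.
Qed.

Lemma regular_epi_iso_comp {A B D : C} {e : Hom A B} {m : Hom B D} :
  is_iso m -> regular_epi e -> regular_epi (m ∘ e).
Proof.
  intros [mi [H1 H2]] [R [a [b [Hc Hu]]]]. exists R, a, b. split.
  - rewrite <- !compA, Hc. reflexivity.
  - intros X x Hx. destruct (Hu X x Hx) as [u [Hu1 Hu2]]. exists (u ∘ mi). split.
    + rewrite <- compA, (compA mi m e), H1, comp_idl. auto.
    + intros v Hv. assert (Hvm : v ∘ m = u) by (apply Hu2; rewrite <- compA; auto).
      rewrite <- Hvm, <- compA, H2, comp_idr. reflexivity.
Qed.

Lemma regular_epi_of_comp {A B D : C} {e : Hom B D} {x : Hom A B} :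
  regular_epi (e ∘ x) -> regular_epi e.
Proof.
  intros H. destruct (Hfact _ _ e) as [I [e' [m [He' [Hm ->]]]]].
  destruct (regular_epi_mono_diagonal H Hm (u := e' ∘ x) (v := idm D)) as [s [Hs _]].
  { rewrite comp_idl. apply compA. }
  apply regular_epi_iso_comp; auto. eapply split_mono_iso; eauto.
Qed.

Lemma regular_epi_comp {A B D : C} {e1 : Hom A B} {e2 : Hom B D} :
  regular_epi e1 -> regular_epi e2 -> regular_epi (e2 ∘ e1).
Proof.
  intros H1 H2. destruct (Hfact _ _ (e2 ∘ e1)) as [I [e [m [He [Hm E]]]]].
  destruct (regular_epi_mono_diagonal H1 Hm (u := e) (v := e2)) as [d [Hd _]]; auto.
  destruct (regular_epi_mono_diagonal H2 Hm (u := d) (v := idm D)) as [s [Hs _]].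
  { rewrite comp_idl; auto. }
  rewrite E. apply regular_epi_iso_comp; auto. eapply split_mono_iso; eauto.
Qed.

Lemma regular_epi_cover {A B X : C} {e : Hom A B} (y : Hom X B) : regular_epi e ->
  exists (X' : C) (c : Hom X' X) (x : Hom X' A), regular_epi c /\ e ∘ x = y ∘ c.
Proof.
  intros He. destruct (Hpb _ _ _ e y) as [P [p1 [p2 H]]].
  exists P, p2, p1. split; [eapply Hstab; eauto | apply H].
Qed.

Lemma pairing_regular_epi {V D PV PD : C} (e : Hom V D) {pv1 pv2 : Hom PV V}
  (HPV : is_product pv1 pv2) {pd1 pd2 : Hom PD D} (HPD : is_product pd1 pd2) :
  regular_epi e -> regular_epi (pairing HPD (e ∘ pv1) (e ∘ pv2)).
Proof.
  intros He. destruct (regular_epi_cover pd1 He) as [X1 [c1 [x1 [Hc1 E1]]]].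
  destruct (regular_epi_cover (pd2 ∘ c1) He) as [X2 [c2 [x2 [Hc2 E2]]]].
  apply (@regular_epi_of_comp _ _ _ _ (pairing HPV (x1 ∘ c2) x2)).
  assert (E : pairing HPD (e ∘ pv1) (e ∘ pv2) ∘ pairing HPV (x1 ∘ c2) x2 = c1 ∘ c2).
  { apply (product_ext HPD); rewrite !compA.
    - rewrite pairing_fst, <- (compA e pv1), pairing_fst, compA, E1. reflexivity.
    - rewrite pairing_snd, <- (compA e pv2), pairing_snd, E2. reflexivity. }
  rewrite E. apply regular_epi_comp; auto.
Qed.

Lemma kernel_exists {T S : C} (p : Hom T S) : exists (K : C) (k : Hom K T), is_kernel k p.
Proof.
  destruct (Hpb _ _ _ p (zero Z S)) as [P [pa [pb H]]]. exists P, pa. split.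
  - rewrite (proj1 H). apply zero_mor_comp_r, zero_is_zero_mor.
  - intros X x Hx.
    assert (E : p ∘ x = zero Z S ∘ zero X Z) by (rewrite zero_comp_r; apply zero_mor_zero; auto).
    destruct (pullback_lift H x (zero X Z) E) as [u [Hu1 Hu2]]. exists u. split; auto.
    intros v Hv. apply (pullback_ext H); [congruence|].
    destruct HZ as [_ HT]. destruct (HT X) as [t Ht].
    rewrite (Ht (pb ∘ v)), (Ht (pb ∘ u)). reflexivity.
Qed.

Lemma kernel_lift {K T S X : C} {k : Hom K T} {p : Hom T S} (x : Hom X T) :
  is_kernel k p -> p ∘ x = zero X S -> exists u, k ∘ u = x.
Proof.
  intros [_ H] E. destruct (H X x) as [u [Hu _]]; [rewrite E; apply zero_is_zero_mor|eauto].
Qed.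

Lemma kernel_comp_zero {K T S : C} {k : Hom K T} {p : Hom T S} :
  is_kernel k p -> p ∘ k = zero K S.
Proof. intros Hk. apply zero_mor_zero, (proj1 Hk). Qed.

(** * Protomodularity *)

Hypothesis Hproto : protomodular C.

Section SplitExtension.
Context {T S Kp : C} {π : Hom T S} {σ : Hom S T} {κ : Hom Kp T}
  (Hσ : π ∘ σ = idm S) (Hκ : is_kernel κ π).

(* The split short five lemma, applied to the restriction of the extension to [m]. *)
Lemma mono_containing_split_extension_iso {SS : C} (m : Hom SS T) :
  mono m -> (exists σ', m ∘ σ' = σ) -> (exists κ', m ∘ κ' = κ) -> is_iso m.
Proof.
  intros Hm [σ' Hσ'] [κ' Hκ'].
  assert (Hk' : is_kernel κ' (π ∘ m)).
  { split.
    - rewrite <- compA, Hκ'. apply (proj1 Hκ).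
    - intros X x Hx. rewrite <- compA in Hx.
      destruct (proj2 Hκ X (m ∘ x) Hx) as [v [Hv Hvu]]. exists v. split.
      + apply Hm. rewrite compA, Hκ'. auto.
      + intros v' Hv'. apply Hvu. rewrite <- Hκ', <- compA, Hv'. reflexivity. }
  apply (Hproto _ _ _ _ _ _ κ' (π ∘ m) σ' κ π σ (idm Kp) m (idm S)); auto.
  - rewrite <- compA, Hσ'. auto.
  - rewrite comp_idr. auto.
  - rewrite comp_idl. auto.
  - rewrite comp_idr. auto.
  - exists (idm Kp). split; apply comp_idl.
  - exists (idm S). split; apply comp_idl.
Qed.

Lemma factor_through_mono_of_split_extension {W M : C} (m : Hom M W) (x : Hom T W) :
  mono m -> (exists z, x ∘ σ = m ∘ z) -> (exists z, x ∘ κ = m ∘ z) ->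
  exists z, x = m ∘ z.
Proof.
  intros Hm Hxσ Hxκ. destruct (preimage_subobject m x Hm) as [SS [s [Hs Hiff]]].
  destruct (mono_containing_split_extension_iso s Hs) as [r [_ Hr]];
    [apply Hiff; auto | apply Hiff; auto |].
  destruct (proj2 (Hiff T (idm T)) (ex_intro _ r Hr)) as [z Hz].
  exists z. rewrite <- Hz, comp_idr. reflexivity.
Qed.

Lemma eq_of_split_extension {W : C} (a b : Hom T W) :
  a ∘ σ = b ∘ σ -> a ∘ κ = b ∘ κ -> a = b.
Proof.
  intros E1 E2. destruct (equalizer_exists a b) as [E [e [He Hiff]]].
  destruct (mono_containing_split_extension_iso e He) as [r [_ Hr]];
    [apply Hiff; auto | apply Hiff; auto |].
  assert (Hae : a ∘ e = b ∘ e) by (apply (proj2 (Hiff E e)); exists (idm E); apply comp_idr).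
  rewrite <- (comp_idr a), <- (comp_idr b), <- Hr, !compA, Hae. reflexivity.
Qed.

End SplitExtension.

Section UnitalProduct.
Context {X Y P : C} {p1 : Hom P X} {p2 : Hom P Y} (H : is_product p1 p2).

Lemma inj2_section : p2 ∘ inj2 H = idm Y.
Proof. apply pairing_snd. Qed.

Lemma inj1_kernel : is_kernel (inj1 H) p2.
Proof.
  unfold inj1. split.
  - rewrite pairing_snd. apply zero_is_zero_mor.
  - intros W x Hx. exists (p1 ∘ x). split.
    + apply (product_ext H); rewrite !compA, ?pairing_fst, ?pairing_snd, ?comp_idl, ?zero_comp_r;
        auto. symmetry; apply zero_mor_zero; auto.
    + intros v Hv. rewrite <- Hv, compA, pairing_fst, comp_idl. reflexivity.
Qed.

Lemma product_eq_on_injections {W : C} (a b : Hom P W) :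
  a ∘ inj1 H = b ∘ inj1 H -> a ∘ inj2 H = b ∘ inj2 H -> a = b.
Proof.
  intros E1 E2. apply (eq_of_split_extension inj2_section inj1_kernel); auto.
Qed.

Lemma product_factor_on_injections {W M : C} (m : Hom M W) (x : Hom P W) : mono m ->
  (exists z, x ∘ inj1 H = m ∘ z) -> (exists z, x ∘ inj2 H = m ∘ z) -> exists z, x = m ∘ z.
Proof.
  intros Hm E1 E2.
  apply (factor_through_mono_of_split_extension inj2_section inj1_kernel); auto.
Qed.

End UnitalProduct.

(** * Cooperating morphisms *)

Definition is_cooperator {K L Y KL : C} {s1 : Hom KL K} {s2 : Hom KL L}
  (H : is_product s1 s2) (u : Hom K Y) (v : Hom L Y) (φ : Hom KL Y) : Prop :=
  φ ∘ inj1 H = u /\ φ ∘ inj2 H = v.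

Lemma normal_subobjects_cooperate {A QK QL Q A' K L KL : C}
  {k : Hom K A} {l : Hom L A} {p : Hom A QK} {q : Hom A QL}
  {π1 : Hom Q QK} {π2 : Hom Q QL} (HQ : is_product π1 π2)
  {s1 : Hom KL K} {s2 : Hom KL L} (HKL : is_product s1 s2)
  (g : Hom A A') (m : Hom A' Q) :
  is_kernel k p -> is_kernel l q -> mono m -> pairing HQ p q = m ∘ g ->
  exists φ, is_cooperator HKL (g ∘ k) (g ∘ l) φ.
Proof.
  intros Hk Hl Hm Hpq.
  set (χ := pairing HQ (p ∘ l ∘ s2) (q ∘ k ∘ s1)).
  assert (E1 : χ ∘ inj1 HKL = m ∘ (g ∘ k)).
  { unfold χ, inj1. rewrite compA, <- Hpq, !pairing_comp.
    apply (product_ext HQ); rewrite ?pairing_fst, ?pairing_snd, <- ?compA, ?pairing_fst,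
      ?pairing_snd, ?zero_comp_l, ?comp_idr, ?(kernel_comp_zero Hk); reflexivity. }
  assert (E2 : χ ∘ inj2 HKL = m ∘ (g ∘ l)).
  { unfold χ, inj2. rewrite compA, <- Hpq, !pairing_comp.
    apply (product_ext HQ); rewrite ?pairing_fst, ?pairing_snd, <- ?compA, ?pairing_fst,
      ?pairing_snd, ?zero_comp_l, ?comp_idr, ?(kernel_comp_zero Hl); reflexivity. }
  destruct (product_factor_on_injections HKL m χ Hm (ex_intro _ _ E1) (ex_intro _ _ E2))
    as [φ Hφ].
  exists φ. split; apply Hm; rewrite compA, <- Hφ; auto.
Qed.

Section Cooperator.
Context {K L KL Y : C} {s1 : Hom KL K} {s2 : Hom KL L} {H : is_product s1 s2}
  {u : Hom K Y} {v : Hom L Y} {φ : Hom KL Y} (Hφ : is_cooperator H u v φ).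

(* Both sides factor through [Eq(u) × L], where they agree on the two injections. *)
Lemma cooperator_congr_l {X : C} (x x' : Hom X K) (y : Hom X L) :
  u ∘ x = u ∘ x' -> φ ∘ pairing H x y = φ ∘ pairing H x' y.
Proof.
  intros E. destruct Hφ as [Hu _].
  destruct (Hpb _ _ _ u u) as [T [t1 [t2 HT]]].
  destruct (product_exists T L) as [PT [r1 [r2 HP]]].
  assert (Ht : φ ∘ pairing H (t1 ∘ r1) r2 = φ ∘ pairing H (t2 ∘ r1) r2).
  { apply (product_eq_on_injections HP); unfold inj1, inj2;
      rewrite <- !compA, !pairing_comp, <- !compA, pairing_fst, pairing_snd.
    - rewrite !comp_idr, (pairing_zero_r H t1), (pairing_zero_r H t2), !compA, Hu.
      apply (proj1 HT).
    - rewrite !zero_comp_l. reflexivity. }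
  destruct (pullback_lift HT x x' E) as [τ [h1 h2]].
  assert (R1 : pairing H x y = pairing H (t1 ∘ r1) r2 ∘ pairing HP τ y).
  { rewrite pairing_comp, <- compA, pairing_fst, pairing_snd, h1. reflexivity. }
  assert (R2 : pairing H x' y = pairing H (t2 ∘ r1) r2 ∘ pairing HP τ y).
  { rewrite pairing_comp, <- compA, pairing_fst, pairing_snd, h2. reflexivity. }
  rewrite R1, R2, !compA, Ht. reflexivity.
Qed.

End Cooperator.

Lemma is_cooperator_swap {K L KL Y : C} {s1 : Hom KL K} {s2 : Hom KL L}
  {H : is_product s1 s2} {u : Hom K Y} {v : Hom L Y} {φ : Hom KL Y} :
  is_cooperator H u v φ -> is_cooperator (product_swap H) v u φ.
Proof.
  intros [Hu Hv]. unfold is_cooperator, inj1, inj2. rewrite !pairing_swap. auto.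
Qed.

Lemma cooperator_congr_r {K L KL Y X : C} {s1 : Hom KL K} {s2 : Hom KL L}
  {H : is_product s1 s2} {u : Hom K Y} {v : Hom L Y} {φ : Hom KL Y} :
  is_cooperator H u v φ -> forall (x : Hom X K) (y y' : Hom X L),
  v ∘ y = v ∘ y' -> φ ∘ pairing H x y = φ ∘ pairing H x y'.
Proof.
  intros Hφ x y y' E. rewrite <- !(pairing_swap H).
  apply (cooperator_congr_l (is_cooperator_swap Hφ)). auto.
Qed.

Lemma inj1_unique {X Y P : C} {p1 : Hom P X} {p2 : Hom P Y} (H : is_product p1 p2)
  (d : Hom X P) : p1 ∘ d = idm X -> is_zero_mor (p2 ∘ d) -> d = inj1 H.
Proof.
  intros H1 H2. apply (product_ext H); unfold inj1.
  - rewrite pairing_fst. exact H1.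
  - rewrite pairing_snd. apply zero_mor_zero. exact H2.
Qed.

Lemma inj2_unique {X Y P : C} {p1 : Hom P X} {p2 : Hom P Y} (H : is_product p1 p2)
  (d : Hom Y P) : is_zero_mor (p1 ∘ d) -> p2 ∘ d = idm Y -> d = inj2 H.
Proof.
  intros H1 H2. apply (product_ext H); unfold inj2.
  - rewrite pairing_fst. apply zero_mor_zero. exact H1.
  - rewrite pairing_snd. exact H2.
Qed.

Lemma pairing_inj1 {V D PV PD : C} (e : Hom V D) {pv1 pv2 : Hom PV V}
  (HPV : is_product pv1 pv2) {pd1 pd2 : Hom PD D} (HPD : is_product pd1 pd2) :
  pairing HPD (e ∘ pv1) (e ∘ pv2) ∘ inj1 HPV = inj1 HPD ∘ e.
Proof.
  unfold inj1. rewrite !pairing_comp, <- !compA, pairing_fst, pairing_snd.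
  rewrite comp_idr, comp_idl, zero_comp_l, zero_comp_r. reflexivity.
Qed.

Lemma pairing_inj2 {V D PV PD : C} (e : Hom V D) {pv1 pv2 : Hom PV V}
  (HPV : is_product pv1 pv2) {pd1 pd2 : Hom PD D} (HPD : is_product pd1 pd2) :
  pairing HPD (e ∘ pv1) (e ∘ pv2) ∘ inj2 HPV = inj2 HPD ∘ e.
Proof.
  unfold inj2. rewrite !pairing_comp, <- !compA, pairing_fst, pairing_snd.
  rewrite comp_idr, comp_idl, zero_comp_l, zero_comp_r. reflexivity.
Qed.

(* [ψ] descends along [e × e] to the multiplication witnessing that [D] is abelian. *)
Lemma abelian_object_of_cover {V D PV : C} (e : Hom V D) {pv1 pv2 : Hom PV V}
  (HPV : is_product pv1 pv2) (ψ : Hom PV D) :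
  regular_epi e -> ψ ∘ inj1 HPV = e -> ψ ∘ inj2 HPV = e ->
  (forall (X : C) (v v' w w' : Hom X V), e ∘ v = e ∘ v' -> e ∘ w = e ∘ w' ->
     ψ ∘ pairing HPV v w = ψ ∘ pairing HPV v' w') ->
  abelian_object D.
Proof.
  intros He Hψ1 Hψ2 Hcompat.
  destruct (product_exists D D) as [PD [pd1 [pd2 HPD]]].
  destruct (regular_epi_factor ψ (pairing_regular_epi e HPV HPD He)) as [φ Hφ].
  { intros Y u u' Eu.
    assert (E1 : e ∘ (pv1 ∘ u) = e ∘ (pv1 ∘ u')).
    { rewrite !compA, <- (pairing_fst HPD (e ∘ pv1) (e ∘ pv2)), <- !compA.
      rewrite Eu. reflexivity. }
    assert (E2 : e ∘ (pv2 ∘ u) = e ∘ (pv2 ∘ u')).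
    { rewrite !compA, <- (pairing_snd HPD (e ∘ pv1) (e ∘ pv2)), <- !compA.
      rewrite Eu. reflexivity. }
    assert (Hu : forall u0 : Hom Y PV, u0 = pairing HPV (pv1 ∘ u0) (pv2 ∘ u0)).
    { intros u0. apply (product_ext HPV); rewrite ?pairing_fst, ?pairing_snd; reflexivity. }
    rewrite (Hu u), (Hu u'). apply Hcompat; auto. }
  exists PD, pd1, pd2. split; auto. exists φ. intros d1 d2 H11 H12 H21 H22.
  rewrite (inj1_unique HPD d1 H11 H12), (inj2_unique HPD d2 H21 H22).
  split; apply (regular_epi_epi He); rewrite comp_idl, <- compA.
  - rewrite <- (pairing_inj1 e HPV HPD), compA, Hφ. exact Hψ1.
  - rewrite <- (pairing_inj2 e HPV HPD), compA, Hφ. exact Hψ2.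
Qed.

Lemma cooperating_meet_image_abelian {K L KL Y V D : C} {s1 : Hom KL K} {s2 : Hom KL L}
  {HKL : is_product s1 s2} {u : Hom K Y} {v : Hom L Y} {φ : Hom KL Y}
  {va : Hom V K} {vb : Hom V L} {e : Hom V D} {m : Hom D Y} :
  is_cooperator HKL u v φ -> is_pullback u v va vb ->
  regular_epi e -> mono m -> u ∘ va = m ∘ e -> abelian_object D.
Proof.
  intros Hφ HV He Hm Eu.
  destruct (product_exists V V) as [PV [pv1 [pv2 HPV]]].
  set (χ := φ ∘ pairing HKL (va ∘ pv1) (vb ∘ pv2)).
  assert (Hχ1 : χ ∘ inj1 HPV = m ∘ e).
  { unfold χ, inj1. rewrite <- compA, pairing_comp, <- !compA, pairing_fst, pairing_snd.
    rewrite comp_idr, zero_comp_l, (pairing_zero_r HKL va), compA, (proj1 Hφ). exact Eu. }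
  assert (Hχ2 : χ ∘ inj2 HPV = m ∘ e).
  { unfold χ, inj2. rewrite <- compA, pairing_comp, <- !compA, pairing_fst, pairing_snd.
    rewrite comp_idr, zero_comp_l, (pairing_zero_l HKL vb), compA, (proj2 Hφ), <- (proj1 HV).
    exact Eu. }
  destruct (product_factor_on_injections HPV m χ Hm (ex_intro _ _ Hχ1) (ex_intro _ _ Hχ2))
    as [ψ Hψ].
  apply (abelian_object_of_cover e HPV ψ He).
  - apply Hm. rewrite compA, <- Hψ. exact Hχ1.
  - apply Hm. rewrite compA, <- Hψ. exact Hχ2.
  - intros X w w' z z' Ew Ez. apply Hm. rewrite !compA, <- Hψ. unfold χ.
    rewrite <- !compA, !pairing_comp, <- !compA, !pairing_fst, !pairing_snd.
    transitivity (φ ∘ pairing HKL (va ∘ w') (vb ∘ z)).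
    + apply (cooperator_congr_l Hφ). rewrite !compA, Eu, <- !compA, Ew. reflexivity.
    + apply (cooperator_congr_r Hφ). rewrite !compA, <- (proj1 HV), Eu, <- !compA, Ez.
      reflexivity.
Qed.

(** * Composing kernel pairs *)

Section CompositeRelation.
Context {A B A' : C} {f : Hom A B} {g : Hom A A'}
  {Rf : C} {f1 f2 : Hom Rf A} (HRf : is_pullback f f f1 f2)
  {Rg : C} {g1 g2 : Hom Rg A} (HRg : is_pullback g g g1 g2)
  {Pi : C} {πa : Hom Pi Rf} {πb : Hom Pi Rg} (HPi : is_pullback f2 g1 πa πb)
  {AA : C} {a1 a2 : Hom AA A} (HA : is_product a1 a2)
  {Rho : C} {mρ : Hom Rho AA} {eρ : Hom Pi Rho}
  (Hmρ : mono mρ) (Heρ : regular_epi eρ) (Hρ : pairing HA (f1 ∘ πa) (g2 ∘ πb) = mρ ∘ eρ).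

Local Notation "x ≈ y" := (relates (a1 ∘ mρ) (a2 ∘ mρ) x y) (at level 70).

Lemma relates_iff_factor {X : C} (x y : Hom X A) :
  x ≈ y <-> exists z, pairing HA x y = mρ ∘ z.
Proof.
  split.
  - intros [h [h1 h2]]. exists h.
    apply (product_ext HA); rewrite ?pairing_fst, ?pairing_snd, ?compA; auto.
  - intros [z Hz]. exists z. rewrite <- !compA, <- Hz, pairing_fst, pairing_snd. auto.
Qed.

Lemma relates_of_composite {X : C} (x z y : Hom X A) :
  f ∘ x = f ∘ z -> g ∘ z = g ∘ y -> x ≈ y.
Proof.
  intros E1 E2. destruct (pullback_lift HRf x z E1) as [ρf [h1 h2]].
  destruct (pullback_lift HRg z y E2) as [ρg [h3 h4]].
  destruct (pullback_lift HPi ρf ρg (eq_trans h2 (eq_sym h3))) as [w [h5 h6]].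
  apply relates_iff_factor. exists (eρ ∘ w).
  rewrite compA, <- Hρ, pairing_comp, <- !compA, h5, h6, h1, h4. reflexivity.
Qed.

Lemma relates_elim {X : C} (x y : Hom X A) : x ≈ y ->
  exists (X' : C) (c : Hom X' X) (z : Hom X' A),
    regular_epi c /\ f ∘ (x ∘ c) = f ∘ z /\ g ∘ z = g ∘ (y ∘ c).
Proof.
  intros Hr. apply relates_iff_factor in Hr. destruct Hr as [h Hh].
  destruct (regular_epi_cover h Heρ) as [X' [c [w [Hc Hw]]]].
  assert (Hxy : pairing HA x y ∘ c = pairing HA (f1 ∘ (πa ∘ w)) (g2 ∘ (πb ∘ w))).
  { rewrite Hh, <- compA, <- Hw, compA, <- Hρ, pairing_comp, !compA. reflexivity. }
  rewrite !pairing_comp in Hxy.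
  assert (Ex : x ∘ c = f1 ∘ (πa ∘ w)).
  { rewrite <- (pairing_fst HA (x ∘ c) (y ∘ c)), Hxy, pairing_fst. reflexivity. }
  assert (Ey : y ∘ c = g2 ∘ (πb ∘ w)).
  { rewrite <- (pairing_snd HA (x ∘ c) (y ∘ c)), Hxy, pairing_snd. reflexivity. }
  exists X', c, (f2 ∘ (πa ∘ w)). split; auto. split.
  - rewrite Ex, !compA, (proj1 HRf). reflexivity.
  - rewrite Ey, (compA f2 πa w), (proj1 HPi), !compA, (proj1 HRg). reflexivity.
Qed.

Lemma relates_of_cover {X X' : C} (c : Hom X' X) (x y : Hom X A) :
  regular_epi c -> x ∘ c ≈ y ∘ c -> x ≈ y.
Proof.
  intros Hc Hr. apply relates_iff_factor in Hr. destruct Hr as [z Hz].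
  rewrite <- pairing_comp in Hz.
  destruct (factor_through_mono_of_cover Hc Hmρ Hz) as [w Hw].
  apply relates_iff_factor. eauto.
Qed.

(* The composites [x ~g z ~f y] form a split extension over [Rf] (projection to [(z, y)],
   section [(z, y) ↦ (z, z, y)]) whose kernel consists of the [(x, 0, 0)] with [x ~g 0];
   on both parts [(x, z, y) ↦ (x, y)] lands in the relation. *)
Lemma relates_of_reverse_composite {X : C} (x z y : Hom X A) :
  g ∘ x = g ∘ z -> f ∘ z = f ∘ y -> x ≈ y.
Proof.
  intros E1 E2.
  destruct (pullback_lift HRg (idm A) (idm A) eq_refl) as [δg [d1 d2]].
  destruct (Hpb _ _ _ g2 f1) as [T [τa [τb HT]]].
  assert (Es : g2 ∘ (δg ∘ f1) = f1 ∘ idm Rf) by (rewrite compA, d2, comp_idl, comp_idr; auto).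
  destruct (pullback_lift HT (δg ∘ f1) (idm Rf) Es) as [σ [σ1 σ2]].
  destruct (kernel_exists τb) as [Kp [κ Hκ]].
  set (xy := pairing HA (g1 ∘ τa) (f2 ∘ τb)).
  destruct (factor_through_mono_of_split_extension σ2 Hκ mρ xy Hmρ) as [w Hw].
  - unfold xy. rewrite pairing_comp, <- !compA, σ1, σ2, compA, d1, comp_idl, comp_idr.
    apply relates_iff_factor. apply (relates_of_composite f1 f2 f2); auto. apply (proj1 HRf).
  - unfold xy. rewrite pairing_comp.
    apply relates_iff_factor. apply (relates_of_composite _ (g1 ∘ τa ∘ κ)); auto.
    transitivity (g ∘ f1 ∘ (τb ∘ κ)).
    + rewrite !compA, (proj1 HRg), <- (compA g g2 τa), (proj1 HT), !compA. reflexivity.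
    + rewrite <- (compA f2 τb κ), (kernel_comp_zero Hκ), !zero_comp_l. reflexivity.
  - destruct (pullback_lift HRg x z E1) as [ρg [h1 h2]].
    destruct (pullback_lift HRf z y E2) as [ρf [h3 h4]].
    destruct (pullback_lift HT ρg ρf (eq_trans h2 (eq_sym h3))) as [t [t1 t2]].
    apply relates_iff_factor. exists (w ∘ t).
    rewrite compA, <- Hw. unfold xy. rewrite pairing_comp, <- !compA, t1, t2, h1, h4.
    reflexivity.
Qed.

Lemma composite_is_equiv_rel : is_equiv_rel (a1 ∘ mρ) (a2 ∘ mρ).
Proof.
  split; [|split; [|split]].
  - intros X u v E1 E2. apply Hmρ. apply (product_ext HA); rewrite ?compA; auto.
  - intros X x. apply (relates_of_composite x x x); auto.
  - intros X x y Hr. destruct (relates_elim x y Hr) as [X' [c [z [Hc [E1 E2]]]]].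
    apply (relates_of_cover c); auto. apply (relates_of_reverse_composite _ z); auto.
  - intros X x y w H1 H2. destruct (relates_elim x y H1) as [X1 [c1 [z1 [Hc1 [E1 E2]]]]].
    assert (H2' : y ∘ c1 ≈ w ∘ c1).
    { destruct H2 as [h [hh1 hh2]]. exists (h ∘ c1). rewrite !compA, hh1, hh2. auto. }
    destruct (relates_elim _ _ H2') as [X2 [c2 [z2 [Hc2 [E3 E4]]]]].
    assert (H3 : z1 ∘ c2 ≈ z2).
    { apply (relates_of_reverse_composite _ (y ∘ c1 ∘ c2)); rewrite !compA.
      - rewrite !compA in E2. rewrite E2. reflexivity.
      - rewrite <- E3, !compA. reflexivity. }
    destruct (relates_elim _ _ H3) as [X3 [c3 [z3 [Hc3 [E5 E6]]]]].
    apply (relates_of_cover (c1 ∘ c2 ∘ c3)); [repeat apply regular_epi_comp; auto|].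
    apply (relates_of_composite _ z3).
    + rewrite <- E5. rewrite !compA in *. rewrite E1. reflexivity.
    + rewrite E6. rewrite !compA in *. rewrite E4. reflexivity.
Qed.

End CompositeRelation.

Hypothesis Hexact : forall (R A : C) (r1 r2 : Hom R A), is_equiv_rel r1 r2 ->
  exists (B : C) (f : Hom A B), is_pullback f f r1 r2.

Lemma kernel_pair_of_composite {A B A' : C} (f : Hom A B) (g : Hom A A') :
  exists (B2 : C) (h : Hom A B2),
    (forall (X : C) (x z y : Hom X A), f ∘ x = f ∘ z -> g ∘ z = g ∘ y -> h ∘ x = h ∘ y) /\
    (forall (X : C) (x y : Hom X A), h ∘ x = h ∘ y ->
       exists (X' : C) (c : Hom X' X) (z : Hom X' A),
         regular_epi c /\ f ∘ (x ∘ c) = f ∘ z /\ g ∘ z = g ∘ (y ∘ c)).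
Proof.
  destruct (Hpb _ _ _ f f) as [Rf [f1 [f2 HRf]]].
  destruct (Hpb _ _ _ g g) as [Rg [g1 [g2 HRg]]].
  destruct (Hpb _ _ _ f2 g1) as [Pi [πa [πb HPi]]].
  destruct (product_exists A A) as [AA [a1 [a2 HA]]].
  destruct (Hfact _ _ (pairing HA (f1 ∘ πa) (g2 ∘ πb))) as [Rho [eρ [mρ [Heρ [Hmρ Hρ]]]]].
  destruct (Hexact _ _ _ _ (composite_is_equiv_rel HRf HRg HPi HA Hmρ Heρ Hρ)) as [B2 [h Hh]].
  exists B2, h. split.
  - intros X x z y E1 E2.
    destruct (relates_of_composite HRf HRg HPi HA Hρ x z y E1 E2) as [w [w1 w2]].
    rewrite <- w1, <- w2, (compA h _ w), (compA h _ w), (proj1 Hh). reflexivity.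
  - intros X x y E. destruct (pullback_lift Hh x y E) as [w Hw].
    apply (relates_elim HRf HRg HPi HA Heρ Hρ). exists w. exact Hw.
Qed.

(** * Images of meets of normal subobjects *)

Lemma regular_image_least {X I W M : C} {g : Hom X W} {m : Hom I W} {n : Hom M W}
  (u : Hom X M) : is_regular_image g m -> mono n -> g = n ∘ u -> exists t, n ∘ t = m.
Proof.
  intros [Hm [e [He ->]]] Hn E.
  destruct (regular_epi_mono_diagonal He Hn (eq_sym E)) as [t [Ht _]]. eauto.
Qed.

Lemma is_cooperator_comp {K L KL Y Y' : C} {s1 : Hom KL K} {s2 : Hom KL L}
  {H : is_product s1 s2} {u : Hom K Y} {v : Hom L Y} {φ : Hom KL Y} (w : Hom Y Y') :
  is_cooperator H u v φ -> is_cooperator H (w ∘ u) (w ∘ v) (w ∘ φ).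
Proof. intros [Hu Hv]. split; rewrite <- compA; congruence. Qed.

Lemma image_of_meet_le_meet_of_images {A B K L IK IL M N J : C}
  {k : Hom K A} {l : Hom L A} {f : Hom A B} {mK : Hom IK B} {mL : Hom IL B}
  {a : Hom M IK} {b : Hom M IL} {c : Hom N K} {d : Hom N L} {mJ : Hom J B} :
  is_regular_image (f ∘ k) mK -> is_regular_image (f ∘ l) mL ->
  is_pullback mK mL a b -> is_pullback k l c d -> is_regular_image (f ∘ (k ∘ c)) mJ ->
  exists s, mK ∘ a ∘ s = mJ.
Proof.
  intros [HmK [eK [_ EK]]] [HmL [eL [_ EL]]] HM HN HJ.
  assert (E : mK ∘ (eK ∘ c) = mL ∘ (eL ∘ d)).
  { rewrite !compA, <- EK, <- EL, <- !compA, (proj1 HN). reflexivity. }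
  destruct (pullback_lift HM _ _ E) as [u [Hu _]].
  apply (regular_image_least u HJ).
  - exact (mono_comp (pullback_mono HM HmL) HmK).
  - rewrite <- compA, Hu, !compA, EK. reflexivity.
Qed.

Hypothesis Habel : forall A : C, abelian_object A -> is_zero A.

Lemma image_meet_normal_lift {A B K L N : C} {k : Hom K A} {l : Hom L A} {f : Hom A B}
  {c : Hom N K} {d : Hom N L} :
  normal_sub k -> normal_sub l -> is_pullback k l c d ->
  forall (X : C) (x : Hom X K) (y : Hom X L), f ∘ (k ∘ x) = f ∘ (l ∘ y) ->
  exists (X' : C) (e : Hom X' X) (z : Hom X' N),
    regular_epi e /\ f ∘ (k ∘ x) ∘ e = f ∘ (k ∘ c) ∘ z.
Proof.
  intros [QK [p Hkp]] [QL [q Hlq]] HN X x y Exy.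
  destruct (product_exists QK QL) as [Q [π1 [π2 HQ]]].
  destruct (Hfact _ _ (pairing HQ p q)) as [A' [g [m [Hg [Hm Epq]]]]].
  destruct (kernel_pair_of_composite f g) as [B2 [h [Hcomp Helim]]].
  destruct (regular_epi_factor h Hg) as [h' Hh'].
  { intros Y u v E. apply (Hcomp Y u u v); auto. }
  destruct (product_exists K L) as [KL [s1 [s2 HKL]]].
  destruct (normal_subobjects_cooperate HQ HKL g m Hkp Hlq Hm Epq) as [φ Hφ].
  apply (is_cooperator_comp h') in Hφ. rewrite !compA, Hh' in Hφ.
  destruct (Hpb _ _ _ (h ∘ k) (h ∘ l)) as [V [va [vb HV]]].
  destruct (Hfact _ _ (h ∘ k ∘ va)) as [D [eD [mD [HeD [HmD ED]]]]].
  assert (HD : is_zero D) by exact (Habel _ (cooperating_meet_image_abelian Hφ HV HeD HmD ED)).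
  assert (Ehkl : h ∘ k ∘ x = h ∘ l ∘ y).
  { rewrite <- !compA. apply (Hcomp X _ (l ∘ y)); auto. }
  destruct (pullback_lift HV x y Ehkl) as [v0 [Hv0 _]].
  assert (Ehk0 : h ∘ (k ∘ x) = h ∘ zero X A).
  { rewrite compA, <- Hv0, compA, ED, zero_comp_l, <- compA.
    apply zero_mor_zero. exists D, (eD ∘ v0), mD. auto. }
  destruct (Helim X _ _ Ehk0) as [X' [e [z [He [Ez1 Ez2]]]]].
  rewrite zero_comp_r, zero_comp_l in Ez2.
  assert (Epz : pairing HQ p q ∘ z = zero X' Q) by (rewrite Epq, <- compA, Ez2, zero_comp_l; auto).
  destruct (kernel_lift z Hkp) as [γ Hγ].
  { rewrite <- (pairing_fst HQ p q), <- compA, Epz, zero_comp_l. auto. }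
  destruct (kernel_lift z Hlq) as [δ Hδ].
  { rewrite <- (pairing_snd HQ p q), <- compA, Epz, zero_comp_l. auto. }
  destruct (pullback_lift HN γ δ (eq_trans Hγ (eq_sym Hδ))) as [ν [Hν _]].
  exists X', e, ν. split; auto.
  rewrite <- compA, Ez1, <- Hγ, <- Hν, !compA. reflexivity.
Qed.

Lemma meet_of_images_le_image_of_meet {A B K L IK IL M N J : C}
  {k : Hom K A} {l : Hom L A} {f : Hom A B} {mK : Hom IK B} {mL : Hom IL B}
  {a : Hom M IK} {b : Hom M IL} {c : Hom N K} {d : Hom N L} {mJ : Hom J B} :
  normal_sub k -> normal_sub l ->
  is_regular_image (f ∘ k) mK -> is_regular_image (f ∘ l) mL ->
  is_pullback mK mL a b -> is_pullback k l c d -> is_regular_image (f ∘ (k ∘ c)) mJ ->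
  exists t, mJ ∘ t = mK ∘ a.
Proof.
  intros Hk Hl [_ [eK [HeK EK]]] [_ [eL [HeL EL]]] HM HN [HmJ [eJ [_ EJ]]].
  destruct (regular_epi_cover a HeK) as [X1 [c1 [x [Hc1 Ex]]]].
  destruct (regular_epi_cover (b ∘ c1) HeL) as [X2 [c2 [y [Hc2 Ey]]]].
  assert (Efk : f ∘ (k ∘ (x ∘ c2)) = mK ∘ a ∘ (c1 ∘ c2)).
  { rewrite !compA, EK, <- (compA mK eK x), Ex, !compA. reflexivity. }
  assert (Efl : f ∘ (l ∘ y) = mK ∘ a ∘ (c1 ∘ c2)).
  { rewrite compA, EL, <- compA, Ey, (proj1 HM), !compA. reflexivity. }
  destruct (image_meet_normal_lift Hk Hl HN X2 (x ∘ c2) y (eq_trans Efk (eq_sym Efl)))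
    as [X3 [c3 [z [Hc3 Ez]]]].
  apply (factor_through_mono_of_cover (regular_epi_comp Hc3 (regular_epi_comp Hc2 Hc1)) HmJ
    (z := eJ ∘ z)).
  rewrite (compA mJ eJ z), <- EJ, <- Ez, Efk, !compA. reflexivity.
Qed.

End SemiAbelianCategory.

Theorem mainTheorem10 :
  forall (C : Cat),
    semi_abelian C ->
    (forall A : C, abelian_object A -> is_zero A) ->
    forall (A B K L : C) (k : Hom K A) (l : Hom L A) (f : Hom A B),
      normal_sub k -> normal_sub l ->
      (* f(K) and f(L) *)
      forall (IK : C) (mK : Hom IK B), is_regular_image (f ∘ k) mK ->
      forall (IL : C) (mL : Hom IL B), is_regular_image (f ∘ l) mL ->
      (* f(K) ∧ f(L), represented by mK ∘ a *)
      forall (M : C) (a : Hom M IK) (b : Hom M IL), is_pullback mK mL a b ->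
      (* K ∧ L, represented by k ∘ c *)
      forall (N : C) (c : Hom N K) (d : Hom N L), is_pullback k l c d ->
      (* f(K ∧ L) *)
      forall (J : C) (mJ : Hom J B), is_regular_image (f ∘ (k ∘ c)) mJ ->
      same_subobject (mK ∘ a) mJ.
Proof.
  intros C [[Z HZ] [[[Hpb [_ [Hfact Hstab]]] Hexact] [Hproto _]]] Habel
    A B K L k l f Hk Hl IK mK HK IL mL HL M a b HM N c d HN J mJ HJ.
  destruct (image_of_meet_le_meet_of_images C HK HL HM HN HJ) as [s Hs].
  destruct (meet_of_images_le_image_of_meet C Z HZ Hpb Hfact Hstab Hproto Hexact Habel
    Hk Hl HK HL HM HN HJ) as [t Ht].
  exists t, s. auto.
Qed.
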